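(* Under the setting below, suppose that (P) is feasible for some $\gamma>1$ and that $m>0$ and $G^a>0$ entrywise for all $a$. Then: (1) there exist a bounded solution $\theta=(\theta^1,\dots,\theta^M)$ of (P) and a bounded solution $V$ of (D); (2) defining, for each $j=1,\dots,N-1$, $a(j):=\min\{a:[\theta^a]_j>0\}$ (which is well defined), the control $u(D_j)=u^{a(j)}$ is the optimal control on $D_j$; (3) letting $P^1_{T_u}\in\mathbb{R}^{(N-1)\times(N-1)}$ be the matrix whose $j$-th row equals the $j$-th row of $P^1_{T_{a(j)}}$, i.e. $[P^1_{T_u}]_{ji}=[P^1_{T_{a(j)}}]_{ji}$, there is a nonnegative vector $\mu\in\mathbb{R}^{N-1}$ satisfying $\gamma(P^1_{T_u})'\mu-\mu=-m$, and $\mu$ is a Lyapunov measure for the closed-loop (controlled) system.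
   Context: Finite-dimensional setting: $\mathcal{X}_N=\{D_1,\dots,D_N\}$ is a finite partition of a compact state space $X\subset\mathbb{R}^q$ with the attractor set $\mathcal{A}\subseteq D_N$; $\mathcal{U}_M=\{u^1,\dots,u^M\}$ is a finite set of control values; $\{\xi^1,\dots,\xi^L\}$ is a finite set of uncertainty values with probabilities $v^1,\dots,v^L\ge0$, $\sum_\ell v^\ell=1$. For the system $x_{n+1}=T(x_n,u_n,\xi_n)$, let $T_{u^a,\xi^\ell}=T(\cdot,u^a,\xi^\ell):X\to X$ and define the $N\times N$ Markov matrix $P_{T_{a,\ell}}$ by $[P_{T_{a,\ell}}]_{ij}=m_L(T_{u^a,\xi^\ell}^{-1}(D_j)\cap D_i)/m_L(D_i)$, $m_L$ the Lebesgue measure. Set $P_{T_a}=\sum_{\ell=1}^L v^\ell P_{T_{a,\ell}}$ and let $P^1_{T_a}\in\mathbb{R}^{(N-1)\times(N-1)}$ be the submatrix of its first $N-1$ rows and columns. Let $G^{a,\ell}\in\mathbb{R}^{N-1}$ be given cost vectors ($[G^{a,\ell}]_j$ is the cost of using $u^a$ on $D_j$ with uncertainty $\xi^\ell$) and $G^a=\sum_\ell v^\ell G^{a,\ell}$. Let $m\in\mathbb{R}^{N-1}$ be a given vector. Prime denotes transpose. Primal LP (P): minimize $\sum_{a=1}^M (G^a)'\theta^a$ over $\theta^1,\dots,\theta^M\in\mathbb{R}^{N-1}$, $\theta^a\ge0$, subject to $\gamma\sum_{a=1}^M(P^1_{T_a})'\theta^a-\sum_{a=1}^M\theta^a=-m$.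 Dual LP (D): maximize $m'V$ over $V\in\mathbb{R}^{N-1}$ subject to $V\le\gamma P^1_{T_a}V+G^a$ (entrywise) for all $a=1,\dots,M$. A (finite-dimensional) Lyapunov measure for a closed-loop matrix $P^1$ is a nonnegative vector $\mu$ with $\gamma (P^1)'\mu-\mu=-m$ for some $\gamma\ge1$ and $m>0$, so that in particular $(P^1)'\mu<\gamma^{-1}\mu$ entrywise. *)

From HB Require Import structures.
From mathcomp Require Import all_boot all_order all_algebra.
Set Implicit Arguments. Unset Strict Implicit. Unset Printing Implicit Defensive.
Import Order.TTheory GRing.Theory Num.Theory.
Local Open Scope ring_scope.

(* States D_1..D_N with N = n.+1; index ord_max (value n) is the attractor cell D_N.
   Column vectors of R^(N-1) are 'cV[R]_n. *)

Definition sub1 (R : Type) (n : nat) (A : 'M[R]_(n.+1)) : 'M[R]_n :=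
  \matrix_(i < n, j < n) A (widen_ord (leqnSn n) i) (widen_ord (leqnSn n) j).

Definition markov (R : numDomainType) (N : nat) (P : 'M[R]_N) : Prop :=
  (forall i j, 0 <= P i j) /\ (forall i, \sum_j P i j = 1).

Definition Pavg (R : numDomainType) (N M L : nat) (v : 'I_L -> R)
  (Pal : 'I_M -> 'I_L -> 'M[R]_N) (a : 'I_M) : 'M[R]_N :=
  \sum_(l < L) v l *: Pal a l.

Definition Gavg (R : numDomainType) (n M L : nat) (v : 'I_L -> R)
  (Gal : 'I_M -> 'I_L -> 'cV[R]_n) (a : 'I_M) : 'cV[R]_n :=
  \sum_(l < L) v l *: Gal a l.

Definition primal_feasible (R : numDomainType) (n M : nat) (gamma : R)
  (P1 : 'I_M -> 'M[R]_n) (m : 'cV[R]_n) (theta : 'I_M -> 'cV[R]_n) : Prop :=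
  (forall a j, 0 <= theta a j 0) /\
  gamma *: (\sum_(a < M) (P1 a)^T *m theta a) - \sum_(a < M) theta a = - m.

Definition primal_obj (R : numDomainType) (n M : nat)
  (G : 'I_M -> 'cV[R]_n) (theta : 'I_M -> 'cV[R]_n) : R :=
  \sum_(a < M) ((G a)^T *m theta a) 0 0.

(* "bounded solution" of (P): a feasible point attaining the (finite) minimum *)
Definition primal_optimal (R : numDomainType) (n M : nat) (gamma : R)
  (P1 : 'I_M -> 'M[R]_n) (G : 'I_M -> 'cV[R]_n) (m : 'cV[R]_n)
  (theta : 'I_M -> 'cV[R]_n) : Prop :=
  primal_feasible gamma P1 m theta /\
  forall theta', primal_feasible gamma P1 m theta' ->
    primal_obj G theta <= primal_obj G theta'.

Definition dual_feasible (R : numDomainType) (n M : nat) (gamma : R)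
  (P1 : 'I_M -> 'M[R]_n) (G : 'I_M -> 'cV[R]_n) (V : 'cV[R]_n) : Prop :=
  forall a j, V j 0 <= gamma * (P1 a *m V) j 0 + G a j 0.

Definition dual_optimal (R : numDomainType) (n M : nat) (gamma : R)
  (P1 : 'I_M -> 'M[R]_n) (G : 'I_M -> 'cV[R]_n) (m : 'cV[R]_n)
  (V : 'cV[R]_n) : Prop :=
  dual_feasible gamma P1 G V /\
  forall V', dual_feasible gamma P1 G V' -> (m^T *m V') 0 0 <= (m^T *m V) 0 0.

Definition first_pos (R : numDomainType) (n M : nat)
  (theta : 'I_M -> 'cV[R]_n) (j : 'I_n) (a : 'I_M) : Prop :=
  0 < theta a j 0 /\ forall b : 'I_M, (b < a)%N -> ~~ (0 < theta b j 0).

Definition Pclosed (R : Type) (n M : nat) (P1 : 'I_M -> 'M[R]_n)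
  (asel : 'I_n -> 'I_M) : 'M[R]_n :=
  \matrix_(j < n, i < n) P1 (asel j) j i.

Definition lyapunov_measure (R : numDomainType) (n : nat) (P1 : 'M[R]_n)
  (mu : 'cV[R]_n) : Prop :=
  (forall j, 0 <= mu j 0) /\
  exists (g : R) (m : 'cV[R]_n), 1 <= g /\ (forall j, 0 < m j 0) /\
    g *: (P1^T *m mu) - mu = - m.

(* (P) and (D) are the occupation-measure and value-function programs of a
   discounted control problem whose deterministic policies are the maps
   pi : cells -> actions.  Call pi proper when I - gamma P_pi has a nonnegative
   inverse; its cost V_pi = (I - gamma P_pi)^-1 G_pi and its occupation measure
   mu_pi = (I - gamma P_pi)^-T m are then nonnegative.  A feasible theta defines a
   randomised policy A with A' (sum_a theta^a) < sum_a theta^a, so I - A is an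
   M-matrix, and acting greedily on its positive supersolution gives a proper
   deterministic policy.  A proper policy of least total cost m'V_pi admits no
   Bellman improvement, hence V_pi is dual feasible and dominates every dual
   feasible V, while the flow carrying mu_pi along pi is primal feasible with the
   same objective.  Strong duality and complementary slackness follow: every
   action charged by an optimal theta attains the Bellman minimum of the optimal
   V > 0, so the closed loop of such a selection is proper and its occupation
   measure is the required Lyapunov measure. *)

From HB Require Import structures.
From mathcomp Require Import all_boot all_order all_algebra.
From mathcomp Require Import ring lra.
Import Order.TTheory GRing.Theory Num.Theory.
Set Implicit Arguments. Unset Strict Implicit.
Local Open Scope ring_scope.

Section NonnegativeInverse.
Variable R : realFieldType.

Definition nonneg_invertible n (B : 'M[R]_n) : bool :=
  (B \in unitmx) && [forall i, [forall j, 0 <= invmx B i j]].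

Lemma trmx_mul_entry n (u v : 'cV[R]_n) :
  (u^T *m v) 0 0 = \sum_j u j 0 * v j 0.
Proof. by rewrite mxE; apply: eq_bigr => j _; rewrite mxE. Qed.

Lemma unitmx_of_injective n (B : 'M[R]_n) :
  (forall y : 'cV[R]_n, B *m y = 0 -> y = 0) -> B \in unitmx.
Proof.
move=> injB; rewrite -row_full_unit -cokermx_eq0; apply/eqP/matrixP => i j.
have /matrixP/(_ i 0) : col j (cokermx B) = 0.
  by apply: injB; rewrite colE mulmxA mulmx_coker mul0mx.
by rewrite !mxE.
Qed.

Lemma nonneg_invertible_tr n (B : 'M[R]_n) :
  nonneg_invertible B -> nonneg_invertible B^T.
Proof.
case/andP=> uB /forallP invB_ge0; rewrite /nonneg_invertible unitmx_tr uB.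
apply/forallP => i; apply/forallP => j; rewrite -trmx_inv mxE.
exact: (forallP (invB_ge0 j)).
Qed.

Lemma nonneg_invertible_mul_ge0 n (B : 'M[R]_n) (y : 'cV[R]_n) :
  nonneg_invertible B -> (forall j, 0 <= y j 0) ->
  forall j, 0 <= (invmx B *m y) j 0.
Proof.
case/andP=> _ /forallP invB_ge0 y_ge0 j; rewrite mxE.
by apply: sumr_ge0 => k _; rewrite mulr_ge0 ?(forallP (invB_ge0 j)).
Qed.

Lemma nonneg_invertible_mono n (B : 'M[R]_n) (y : 'cV[R]_n) :
  nonneg_invertible B -> (forall j, 0 <= (B *m y) j 0) -> forall j, 0 <= y j 0.
Proof.
move=> nnB By_ge0 j; have uB : B \in unitmx by case/andP: nnB.
by rewrite -(mulKmx uB y); apply: nonneg_invertible_mul_ge0.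
Qed.

Section MMatrix.
Variables (n : nat) (A : 'M[R]_n) (x : 'cV[R]_n).
Hypothesis A_ge0 : forall i j, 0 <= A i j.
Hypothesis x_gt0 : forall j, 0 < x j 0.
Hypothesis Ax_lt : forall j, (A *m x) j 0 < x j 0.

(* Compare y with its largest multiple t x lying below it: at the index where
   y_k / x_k is minimal, a negative t would give t x_k < t (A x)_k <= (A y)_k <= y_k. *)
Lemma Mmatrix_mono (y : 'cV[R]_n) :
  (forall j, 0 <= ((1%:M - A) *m y) j 0) -> forall j, 0 <= y j 0.
Proof.
move=> By_ge0 j.
pose ratio i := y i 0 / x i 0.
have [k _ kmin] := @arg_minP _ _ _ j xpredT ratio isT.
set t := ratio k in kmin.
have tx_le : forall i, t * x i 0 <= y i 0 by move=> i; rewrite -ler_pdivlMr ?kmin.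
suff t_ge0 : 0 <= t.
  by apply: le_trans (tx_le j); rewrite mulr_ge0 // ltW.
rewrite leNgt; apply/negP => t_lt0.
have yk : y k 0 = t * x k 0 by rewrite /t /ratio divfK ?gt_eqF.
have Ay_le : (A *m y) k 0 <= y k 0.
  by have := By_ge0 k; rewrite mulmxBl mul1mx !mxE subr_ge0.
have tAx_le : t * (A *m x) k 0 <= (A *m y) k 0.
  rewrite !mxE mulr_sumr; apply: ler_sum => i _.
  by rewrite mulrCA ler_wpM2l.
have txk_lt : t * x k 0 < t * (A *m x) k 0 by rewrite ltr_nM2l.
by have := lt_le_trans txk_lt (le_trans tAx_le Ay_le); rewrite -yk ltxx.
Qed.

Lemma Mmatrix_nonneg_invertible : nonneg_invertible (1%:M - A).
Proof.
have uB : 1%:M - A \in unitmx.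
  apply: unitmx_of_injective => y By0; apply/matrixP => i j; rewrite ord1 mxE.
  apply/eqP; rewrite eq_le -oppr_ge0; apply/andP; split.
    have -> : - y i 0 = (- y) i 0 by rewrite mxE.
    by apply: Mmatrix_mono => k; rewrite mulmxN By0 !mxE oppr0.
  by apply: Mmatrix_mono => k; rewrite By0 mxE.
rewrite /nonneg_invertible uB; apply/forallP => i; apply/forallP => j.
have -> : invmx (1%:M - A) i j = (invmx (1%:M - A) *m delta_mx j (0 : 'I_1)) i 0.
  by rewrite -colE mxE.
apply: Mmatrix_mono => k; rewrite mulmxA mulmxV // mul1mx mxE.
by case: (_ && _).
Qed.

End MMatrix.

Lemma tr_supersolution n (A : 'M[R]_n) (s : 'cV[R]_n) :
  (forall i j, 0 <= A i j) -> (forall j, 0 < s j 0) ->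
  (forall j, (A^T *m s) j 0 < s j 0) ->
  exists2 x : 'cV[R]_n, (forall j, 0 < x j 0) & forall j, (A *m x) j 0 < x j 0.
Proof.
move=> A_ge0 s_gt0 Ats_lt.
have nnB : nonneg_invertible (1%:M - A).
  rewrite -[A]trmxK -[1%:M]tr_scalar_mx -linearB; apply: nonneg_invertible_tr.
  by apply: (Mmatrix_nonneg_invertible (x := s)) => // i j; rewrite mxE.
have uB : 1%:M - A \in unitmx by case/andP: nnB.
pose x : 'cV[R]_n := invmx (1%:M - A) *m const_mx 1.
have x_ge0 : forall j, 0 <= x j 0.
  by apply: nonneg_invertible_mul_ge0 => // j; rewrite mxE.
have xE : forall j, x j 0 = 1 + (A *m x) j 0.
  move=> j; have /matrixP/(_ j 0) := mulKVmx uB (const_mx 1 : 'cV[R]_n).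
  rewrite -/x mulmxBl mul1mx [_ j 0]mxE [const_mx 1 j 0]mxE => <-.
  by rewrite [(- (A *m x)) j 0]mxE subrK.
have Ax_ge0 : forall j, 0 <= (A *m x) j 0.
  by move=> j; rewrite mxE; apply: sumr_ge0 => k _; rewrite mulr_ge0.
by exists x => j; rewrite xE ?ltr_pwDl ?ltrDr.
Qed.

End NonnegativeInverse.

Section DiscountedControl.
Variables (R : realFieldType) (n M : nat) (P1 : 'I_M -> 'M[R]_n)
  (G : 'I_M -> 'cV[R]_n) (m : 'cV[R]_n) (gamma : R).
Hypothesis P1_ge0 : forall a i j, 0 <= P1 a i j.
Hypothesis G_gt0 : forall a j, 0 < G a j 0.
Hypothesis m_gt0 : forall j, 0 < m j 0.
Hypothesis gamma_ge0 : 0 <= gamma.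

Implicit Types (pi : 'I_n -> 'I_M) (W x : 'cV[R]_n) (th : 'I_M -> 'cV[R]_n).

Definition bellman W a j := gamma * (P1 a *m W) j 0 + G a j 0.
Definition policy_cost pi : 'cV[R]_n := \col_j G (pi j) j 0.
Definition policy_mx pi := 1%:M - gamma *: Pclosed P1 pi.
Definition proper pi := nonneg_invertible (policy_mx pi).
Definition value pi := invmx (policy_mx pi) *m policy_cost pi.
Definition total_cost pi := (m^T *m value pi) 0 0.

Lemma P1_mul_ge0 a W j : (forall k, 0 <= W k 0) -> 0 <= (P1 a *m W) j 0.
Proof. by move=> W_ge0; rewrite mxE; apply: sumr_ge0 => k _; apply: mulr_ge0. Qed.

Lemma policy_mx_mulE pi W j :
  (policy_mx pi *m W) j 0 = W j 0 - gamma * (P1 (pi j) *m W) j 0.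
Proof.
rewrite mulmxBl mul1mx -scalemxAl !mxE; congr (_ - _ * _).
by apply: eq_bigr => i _; rewrite mxE.
Qed.

Lemma proper_of_supersolution pi x : (forall j, 0 < x j 0) ->
  (forall j, gamma * (P1 (pi j) *m x) j 0 < x j 0) -> proper pi.
Proof.
move=> x_gt0 Px_lt; apply: (Mmatrix_nonneg_invertible (x := x)) => //.
  by move=> i j; rewrite !mxE mulr_ge0.
move=> j; have := Px_lt j; congr (_ < _).
by rewrite -scalemxAl !mxE; congr (_ * _); apply: eq_bigr => i _; rewrite mxE.
Qed.

Lemma value_fixpoint pi : proper pi ->
  forall j, value pi j 0 = bellman (value pi) (pi j) j.
Proof.
move=> pr j; have uB : policy_mx pi \in unitmx by case/andP: pr.
have /matrixP/(_ j 0) := mulKVmx uB (policy_cost pi).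
rewrite -/(value pi) policy_mx_mulE => VE.
have Gj : G (pi j) j 0 = policy_cost pi j 0 by rewrite mxE.
by rewrite /bellman Gj -VE addrC subrK.
Qed.

Lemma value_gt0 pi : proper pi -> forall j, 0 < value pi j 0.
Proof.
move=> pr; have V_ge0 : forall j, 0 <= value pi j 0.
  by apply: nonneg_invertible_mul_ge0 => // j; rewrite mxE ltW.
by move=> j; rewrite value_fixpoint // ltr_wpDl // mulr_ge0 ?P1_mul_ge0.
Qed.

Lemma policy_mx_value_sub pi W j : proper pi ->
  (policy_mx pi *m (value pi - W)) j 0 = bellman W (pi j) j - W j 0.
Proof.
move=> pr; rewrite mulmxBr mxE [(- (_ *m W)) j 0]mxE !policy_mx_mulE.
by rewrite {1}value_fixpoint // /bellman; ring.
Qed.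

Lemma value_ge pi W : proper pi ->
  (forall j, W j 0 <= bellman W (pi j) j) -> forall j, W j 0 <= value pi j 0.
Proof.
move=> pr W_le j; rewrite -subr_ge0.
have -> : value pi j 0 - W j 0 = (value pi - W) j 0 by rewrite !mxE.
by apply: (nonneg_invertible_mono pr) => k; rewrite policy_mx_value_sub // subr_ge0.
Qed.

Lemma value_le pi W : proper pi ->
  (forall j, bellman W (pi j) j <= W j 0) -> forall j, value pi j 0 <= W j 0.
Proof.
move=> pr W_ge j; rewrite -subr_ge0.
have -> : W j 0 - value pi j 0 = (- (value pi - W)) j 0 by rewrite !mxE opprB.
apply: (nonneg_invertible_mono pr) => k.
by rewrite mulmxN mxE policy_mx_value_sub // oppr_ge0 subr_le0.
Qed.

Lemma value_lt pi W j : proper pi ->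
  (forall k, bellman W (pi k) k <= W k 0) -> bellman W (pi j) j < W j 0 ->
  value pi j 0 < W j 0.
Proof.
move=> pr W_ge W_gt; rewrite -subr_gt0.
have D_ge0 : forall k, 0 <= (W - value pi) k 0.
  move=> k; have -> : (W - value pi) k 0 = W k 0 - value pi k 0 by rewrite !mxE.
  by rewrite subr_ge0 value_le.
have BD : (policy_mx pi *m (W - value pi)) j 0 = W j 0 - bellman W (pi j) j.
  by rewrite -opprB mulmxN mxE policy_mx_value_sub // opprB.
rewrite policy_mx_mulE in BD.
have PD_ge0 : 0 <= gamma * (P1 (pi j) *m (W - value pi)) j 0.
  by rewrite mulr_ge0 ?P1_mul_ge0.
have -> : W j 0 - value pi j 0 = (W - value pi) j 0 by rewrite !mxE.
lra.
Qed.

Lemma policy_improvement pi pi' j : proper pi ->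
  (forall k, bellman (value pi) (pi' k) k <= value pi k 0) ->
  bellman (value pi) (pi' j) j < value pi j 0 ->
  proper pi' /\ total_cost pi' < total_cost pi.
Proof.
move=> pr V_ge V_gt; have V_gt0 := value_gt0 pr.
have pr' : proper pi'.
  apply: (proper_of_supersolution (x := value pi)) => // k.
  by apply: lt_le_trans (V_ge k); rewrite ltrDl.
split=> //; rewrite /total_cost !trmx_mul_entry (bigD1 j) //= [ltRHS](bigD1 j) //=.
apply: ltr_leD; first by rewrite ltr_pM2l // value_lt.
by apply: ler_sum => k _; rewrite ler_pM2l // value_le.
Qed.

(* A proper policy of least total cost: were its value not dual feasible, the
   greedy policy for that value would be a strict improvement. *)
Lemma optimal_policy_exists : (exists pi, proper pi) ->
  exists2 pi, proper pi & dual_feasible gamma P1 G (value pi).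
Proof.
case=> pi0 pr0.
have pr0' : proper [ffun j => pi0 j].
  rewrite /proper (_ : policy_mx _ = policy_mx pi0) //.
  by apply/matrixP => i k; rewrite !mxE ffunE.
have [pi pr pi_min] := @arg_minP _ _ _ [ffun j => pi0 j]
   (fun p : {ffun 'I_n -> 'I_M} => proper p) (fun p => total_cost p) pr0'.
exists pi => // a j; rewrite leNgt; apply/negP => V_gt.
pose V := value pi.
pose greedy := [ffun k => [arg min_(b < pi k) bellman V b k]%O].
have greedy_min : forall k b, bellman V (greedy k) k <= bellman V b k.
  move=> k b; rewrite ffunE.
  by case: (@arg_minP _ _ _ (pi k) xpredT (fun b => bellman V b k) isT) => c _; apply.
have greedy_le : forall k, bellman V (greedy k) k <= V k 0.
  by move=> k; rewrite [leRHS]value_fixpoint.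
have greedy_lt : bellman V (greedy j) j < V j 0.
  exact: le_lt_trans (greedy_min j a) V_gt.
have [pr_greedy] := policy_improvement pr greedy_le greedy_lt.
by rewrite ltNge pi_min.
Qed.

Lemma primal_feasibleE th : primal_feasible gamma P1 m th ->
  m = \sum_a th a - gamma *: \sum_a (P1 a)^T *m th a.
Proof. by case=> _ E; rewrite -[m]opprK -E opprB. Qed.

Lemma feasible_sum_gt0 th : primal_feasible gamma P1 m th ->
  forall j, 0 < \sum_a th a j 0.
Proof.
move=> f j; apply: lt_le_trans (m_gt0 j) _; have [th_ge0 _] := f.
rewrite (primal_feasibleE f) !mxE summxE gerBl mulr_ge0 // summxE.
by apply: sumr_ge0 => a _; rewrite mxE; apply: sumr_ge0 => k _; rewrite mxE mulr_ge0.
Qed.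

Lemma feasible_support th j : primal_feasible gamma P1 m th ->
  exists a, 0 < th a j 0.
Proof.
move=> f; case: (boolP [exists a, 0 < th a j 0]) => [/existsP //|/existsPn th_le0].
have := feasible_sum_gt0 f j; rewrite ltNge => /negP[].
by apply: sumr_le0 => a _; rewrite leNgt th_le0.
Qed.

(* The randomised policy playing a in cell j with probability
   theta^a_j / sum_b theta^b_j, scaled by gamma. *)
Definition mixed_mx th : 'M[R]_n :=
  \matrix_(j, i) (gamma * \sum_a th a j 0 / (\sum_b th b j 0) * P1 a j i).

Lemma mixed_mx_mulE th x j : (mixed_mx th *m x) j 0 =
  gamma * \sum_a th a j 0 / (\sum_b th b j 0) * (P1 a *m x) j 0.
Proof.
rewrite mxE; under eq_bigr => i _ do rewrite mxE -mulrA mulr_suml.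
rewrite -mulr_sumr exchange_big; congr (_ * _); apply: eq_bigr => a _.
by rewrite mxE mulr_sumr; apply: eq_bigr => i _; rewrite mulrA.
Qed.

Lemma mixed_mx_tr_mul th : (forall j, 0 < \sum_a th a j 0) ->
  (mixed_mx th)^T *m \sum_a th a = gamma *: \sum_a (P1 a)^T *m th a.
Proof.
move=> s_gt0; apply/matrixP => i k; rewrite ord1 !mxE summxE mulr_sumr.
under [RHS]eq_bigr => a _ do rewrite mxE mulr_sumr.
rewrite [RHS]exchange_big; apply: eq_bigr => j _.
rewrite !mxE summxE -mulrA mulr_suml mulr_sumr; apply: eq_bigr => a _.
by rewrite mxE; field; rewrite gt_eqF.
Qed.

Lemma mixed_supersolution th : primal_feasible gamma P1 m th ->
  exists2 x : 'cV[R]_n,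
    (forall j, 0 < x j 0) & forall j, (mixed_mx th *m x) j 0 < x j 0.
Proof.
move=> f; have [th_ge0 _] := f; have s_gt0 := feasible_sum_gt0 f.
apply: (tr_supersolution (s := \sum_a th a)).
- move=> j i; rewrite mxE mulr_ge0 // sumr_ge0 // => a _.
  by rewrite mulr_ge0 // divr_ge0 // ltW.
- by move=> j; rewrite summxE.
move=> i; rewrite mixed_mx_tr_mul // -subr_gt0.
have -> : (\sum_a th a) i 0 - (gamma *: \sum_a (P1 a)^T *m th a) i 0 = m i 0.
  by rewrite (primal_feasibleE f) !mxE.
exact: m_gt0.
Qed.

Lemma exists_proper th : primal_feasible gamma P1 m th -> exists pi, proper pi.
Proof.
move=> f; have [th_ge0 _] := f; have s_gt0 := feasible_sum_gt0 f.
have [x x_gt0 Ax_lt] := mixed_supersolution f.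
pose pi j := [arg min_(a < xchoose (feasible_support j f)) (P1 a *m x) j 0]%O.
have pi_min : forall j a, (P1 (pi j) *m x) j 0 <= (P1 a *m x) j 0.
  move=> j a; rewrite /pi.
  by case: arg_minP => // b _; apply.
exists pi; apply: (proper_of_supersolution x_gt0) => j.
apply: le_lt_trans (Ax_lt j); rewrite mixed_mx_mulE ler_wpM2l //.
rewrite -[X in X <= _]mul1r -(divff (lt0r_neq0 (s_gt0 j))) mulr_suml mulr_suml.
apply: ler_sum => a _; rewrite ler_wpM2l ?pi_min //.
by rewrite divr_ge0 // ltW.
Qed.

Lemma duality_gap th W : primal_feasible gamma P1 m th ->
  primal_obj G th - (m^T *m W) 0 0 =
  \sum_a \sum_j th a j 0 * (bellman W a j - W j 0).
Proof.
move=> f; rewrite (primal_feasibleE f) linearB /= linearZ /= !linear_sum /=.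
rewrite mulmxDl !mulmx_suml mxE !summxE /primal_obj -big_split -sumrB /=.
apply: eq_bigr => a _; rewrite mulNmx -scalemxAl trmx_mul trmxK -mulmxA.
rewrite [(- (_ : 'M[R]_1)) 0 0]mxE [(_ *: (_ : 'M[R]_1)) 0 0]mxE.
rewrite !trmx_mul_entry mulr_sumr -sumrN.
rewrite -!big_split -sumrB /=; apply: eq_bigr => j _.
rewrite /bellman; ring.
Qed.

Lemma weak_duality th W : primal_feasible gamma P1 m th ->
  dual_feasible gamma P1 G W -> (m^T *m W) 0 0 <= primal_obj G th.
Proof.
move=> f W_feas; rewrite -subr_ge0 duality_gap //.
apply: sumr_ge0 => a _; apply: sumr_ge0 => j _.
apply: mulr_ge0; first by case: f.
by rewrite subr_ge0; apply: W_feas.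
Qed.

Definition occupation pi := invmx (policy_mx pi)^T *m m.

Definition policy_flow pi a : 'cV[R]_n :=
  \col_j (if a == pi j then occupation pi j 0 else 0).

Lemma occupation_ge0 pi : proper pi -> forall j, 0 <= occupation pi j 0.
Proof.
move=> pr; apply: nonneg_invertible_mul_ge0 (nonneg_invertible_tr pr) _ => j.
by rewrite ltW.
Qed.

Lemma occupation_eq pi : proper pi ->
  gamma *: ((Pclosed P1 pi)^T *m occupation pi) - occupation pi = - m.
Proof.
move=> pr; have uB : (policy_mx pi)^T \in unitmx by rewrite unitmx_tr; case/andP: pr.
have := mulKVmx uB m; rewrite -/(occupation pi) linearB /= tr_scalar_mx linearZ /=.
by rewrite mulmxBl mul1mx -scalemxAl => <-; rewrite opprB.
Qed.

Lemma policy_flowE pi a j :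
  policy_flow pi a j 0 = if a == pi j then occupation pi j 0 else 0.
Proof. by rewrite [LHS]mxE. Qed.

Lemma sum_policy_flow pi (F : 'I_M -> R) j :
  \sum_a F a * policy_flow pi a j 0 = F (pi j) * occupation pi j 0.
Proof.
rewrite (bigD1 (pi j)) //= policy_flowE eqxx big1 ?addr0 // => a /negbTE a_neq.
by rewrite policy_flowE a_neq mulr0.
Qed.

Lemma policy_flow_feasible pi : proper pi -> primal_feasible gamma P1 m (policy_flow pi).
Proof.
move=> pr; split=> [a j|].
  by rewrite policy_flowE; case: eqP => // _; apply: occupation_ge0.
rewrite -(occupation_eq pr); congr (_ *: _ - _).
  apply/matrixP => i k; rewrite ord1 summxE.
  under eq_bigr => a _ do rewrite mxE.
  rewrite [RHS]mxE exchange_big; apply: eq_bigr => j _; rewrite mxE.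
  under eq_bigr => a _ do rewrite mxE.
  by rewrite sum_policy_flow !mxE.
apply/matrixP => i k; rewrite ord1 summxE -[RHS]mul1r.
by rewrite -(sum_policy_flow pi (fun=> 1)); apply: eq_bigr => a _; rewrite mul1r.
Qed.

Lemma policy_flow_obj pi : proper pi -> primal_obj G (policy_flow pi) = total_cost pi.
Proof.
move=> pr; apply/eqP; rewrite -subr_eq0 (duality_gap _ (policy_flow_feasible pr)).
rewrite exchange_big big1 // => j _; under eq_bigr => a _ do rewrite mulrC.
by rewrite sum_policy_flow -value_fixpoint // subrr mul0r.
Qed.

Lemma value_dual_optimal pi : proper pi -> dual_feasible gamma P1 G (value pi) ->
  dual_optimal gamma P1 G m (value pi).
Proof.
move=> pr V_feas; split=> // W W_feas; rewrite !trmx_mul_entry.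
apply: ler_sum => j _; rewrite ler_wpM2l ?(ltW (m_gt0 j)) //.
by apply: value_ge => // k; apply: W_feas.
Qed.

Lemma policy_flow_primal_optimal pi : proper pi ->
  dual_feasible gamma P1 G (value pi) -> primal_optimal gamma P1 G m (policy_flow pi).
Proof.
move=> pr V_feas; split=> [|th f]; first exact: policy_flow_feasible.
by rewrite policy_flow_obj //; apply: weak_duality.
Qed.

Lemma dual_optimal_eq_value pi V : proper pi -> dual_feasible gamma P1 G (value pi) ->
  dual_optimal gamma P1 G m V -> V = value pi.
Proof.
move=> pr Vpi_feas [V_feas V_max].
have terms_ge0 : forall j, 0 <= m j 0 * (value pi j 0 - V j 0).
  move=> j; rewrite mulr_ge0 ?(ltW (m_gt0 j)) // subr_ge0.
  by apply: value_ge => // k; apply: V_feas.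
have gap0 : \sum_j m j 0 * (value pi j 0 - V j 0) = 0.
  apply/eqP; rewrite eq_le sumr_ge0 // andbT.
  under eq_bigr => j _ do rewrite mulrBr.
  by rewrite sumrB subr_le0 -!trmx_mul_entry V_max.
apply/matrixP => j k; rewrite ord1.
move/eqP: (psumr_eq0P (fun j _ => terms_ge0 j) gap0 (i := j) isT).
by rewrite mulf_eq0 gt_eqF //= subr_eq0 => /eqP.
Qed.

Lemma strong_duality th V : primal_optimal gamma P1 G m th ->
  dual_optimal gamma P1 G m V -> primal_obj G th = (m^T *m V) 0 0.
Proof.
move=> [f th_min] V_opt; have [V_feas _] := V_opt.
have [pi pr Vpi_feas] := optimal_policy_exists (exists_proper f).
apply/eqP; rewrite eq_le weak_duality // andbT.
rewrite (dual_optimal_eq_value pr Vpi_feas V_opt) -/(total_cost pi).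
by rewrite -policy_flow_obj // th_min //; apply: policy_flow_feasible.
Qed.

Lemma complementary_slackness th V a j : primal_optimal gamma P1 G m th ->
  dual_optimal gamma P1 G m V -> 0 < th a j 0 -> V j 0 = bellman V a j.
Proof.
move=> th_opt V_opt th_gt0; have [[th_ge0 _] _] := th_opt; have [V_feas _] := V_opt.
have terms_ge0 : forall b k, 0 <= th b k 0 * (bellman V b k - V k 0).
  by move=> b k; rewrite mulr_ge0 // subr_ge0; apply: V_feas.
have := duality_gap V th_opt.1; rewrite (strong_duality th_opt V_opt) subrr => /esym gap0.
have := psumr_eq0P (fun b _ => sumr_ge0 _ (fun k _ => terms_ge0 b k)) gap0 (i := a) isT.
move/(psumr_eq0P (fun k _ => terms_ge0 a k))/(_ j isT)/eqP.
by rewrite mulf_eq0 gt_eqF //= subr_eq0 => /eqP.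
Qed.

Lemma first_pos_exists th j : primal_feasible gamma P1 m th -> exists a, first_pos th j a.
Proof.
move=> /(feasible_support j) [a th_gt0].
have [b b_pos b_min] := @arg_minnP _ a (fun b => 0 < th b j 0) val th_gt0.
exists b; split=> // c c_lt; apply/negP => c_pos.
by have := b_min c c_pos; rewrite leqNgt c_lt.
Qed.

Lemma first_pos_proper th V asel : primal_optimal gamma P1 G m th ->
  dual_optimal gamma P1 G m V -> (forall j, first_pos th j (asel j)) -> proper asel.
Proof.
move=> th_opt V_opt asel_first.
have [pi pr Vpi_feas] := optimal_policy_exists (exists_proper th_opt.1).
have V_gt0 : forall j, 0 < V j 0.
  by rewrite (dual_optimal_eq_value pr Vpi_feas V_opt); apply: value_gt0.
apply: (proper_of_supersolution V_gt0) => j; have [th_gt0 _] := asel_first j.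
by rewrite [ltRHS](complementary_slackness th_opt V_opt th_gt0) ltrDl.
Qed.

Lemma occupation_lyapunov pi : 1 <= gamma -> proper pi ->
  lyapunov_measure (Pclosed P1 pi) (occupation pi).
Proof.
move=> gamma_ge1 pr; split; first exact: occupation_ge0.
by exists gamma, m; do !split => //; apply: occupation_eq.
Qed.

End DiscountedControl.

Unset Implicit Arguments.

Theorem theorem2 (R : realFieldType) (n M L : nat)
  (v : 'I_L -> R) (Pal : 'I_M -> 'I_L -> 'M[R]_(n.+1))
  (Gal : 'I_M -> 'I_L -> 'cV[R]_n) (m : 'cV[R]_n) (gamma : R)
  (hv0 : forall l, 0 <= v l) (hv1 : \sum_(l < L) v l = 1)
  (hPal : forall a l, markov (Pal a l))
  (hgamma : 1 < gamma)
  (hfeas : exists theta, primal_feasible gamma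
             (fun a => sub1 (Pavg v Pal a)) m theta)
  (hm : forall j, 0 < m j 0)
  (hG : forall a j, 0 < Gavg v Gal a j 0) :
  let P1 := fun a => sub1 (Pavg v Pal a) in
  let G := Gavg v Gal in
  (* (1) *)
  (exists theta, primal_optimal gamma P1 G m theta) /\
  (exists V, dual_optimal gamma P1 G m V) /\
  forall theta V, primal_optimal gamma P1 G m theta -> dual_optimal gamma P1 G m V ->
  (* (2) a(j) is well defined *)
  (forall j, exists a, first_pos theta j a) /\
  forall asel : 'I_n -> 'I_M, (forall j, first_pos theta j (asel j)) ->
  (* (2) u^{a(j)} is optimal on D_j: it attains the Bellman minimum for V *)
  (forall j, V j 0 = gamma * (P1 (asel j) *m V) j 0 + G (asel j) j 0 /\
     forall a, gamma * (P1 (asel j) *m V) j 0 + G (asel j) j 0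
               <= gamma * (P1 a *m V) j 0 + G a j 0) /\
  (* (3) *)
  exists mu : 'cV[R]_n, (forall j, 0 <= mu j 0) /\
    gamma *: ((Pclosed P1 asel)^T *m mu) - mu = - m /\
    lyapunov_measure (Pclosed P1 asel) mu.
Proof.
move=> P1 G.
have P1_ge0 : forall a i j, 0 <= P1 a i j.
  move=> a i j; rewrite !mxE summxE; apply: sumr_ge0 => l _.
  by rewrite mxE mulr_ge0 //; case: (hPal a l).
have G_gt0 : forall a j, 0 < G a j 0 := hG.
have gamma_ge0 : 0 <= gamma := ltW (lt_trans ltr01 hgamma).
have [th0 feas0] := hfeas.
have [pi pi_proper pi_feas] := optimal_policy_exists P1_ge0 G_gt0 hm gamma_ge0
  (exists_proper P1_ge0 hm gamma_ge0 feas0).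
split; first by exists (policy_flow P1 m gamma pi);
  exact: (policy_flow_primal_optimal hm pi_proper pi_feas).
split; first by exists (value P1 G gamma pi); exact: (value_dual_optimal hm pi_proper pi_feas).
move=> th V th_opt V_opt; split=> [j|asel asel_first].
  exact: (first_pos_exists P1_ge0 hm gamma_ge0 j th_opt.1).
have asel_proper :=
  first_pos_proper P1_ge0 G_gt0 hm gamma_ge0 th_opt V_opt asel_first.
split=> [j|].
  have [th_pos _] := asel_first j.
  have V_eq := complementary_slackness P1_ge0 G_gt0 hm gamma_ge0 th_opt V_opt th_pos.
  by split=> // a; have := V_opt.1 a j; rewrite {1}V_eq.
exists (occupation P1 m gamma asel); split; first exact: (occupation_ge0 hm asel_proper).
split; first exact: (occupation_eq m asel_proper).
exact: (occupation_lyapunov hm (ltW hgamma) asel_proper).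
Qed.
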